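(* Let $k:[0,1]\times[0,1]\to\mathbb{R}$ be continuous and let $f$ be a real function of $(x,u,v,z)$. Define $$G_0(x,s)=\frac16\begin{cases} s(x-1)(x^2-x+s^2), & 0\le s\le x\le 1,\\ x(s-1)(s^2-s+x^2), & 0\le x\le s\le 1,\end{cases}\qquad G_1(x,s)=\frac16\begin{cases} s(3x^2-6x+s^2+2), & 0\le s\le x\le 1,\\ (s-1)(3x^2-2s+s^2), & 0\le x\le s\le 1,\end{cases}$$ $M_0=\max_{0\le x\le1}\int_0^1|G_0(x,s)|\,ds$, $M_1=\max_{0\le x\le 1}\int_0^1|G_1(x,s)|\,ds$, $M_2=\max_{0\le x\le1}\int_0^1|k(x,s)|\,ds$, and for $M>0$ $$\mathcal{D}_M=\{(x,u,v,z): 0\le x\le 1,\ |u|\le M_0M,\ |v|\le M_1M,\ |z|\le M_0M_2M\}.$$ Suppose there exist numbers $M>0$ and $L_0,L_1,L_2\ge 0$ such that: (i) $f$ is continuous on $\mathcal{D}_M$ and $|f(x,u,v,z)|\le M$ for all $(x,u,v,z)\in\mathcal{D}_M$; (ii) $|f(x_2,u_2,v_2,z_2)-f(x_1,u_1,v_1,z_1)|\le L_0|u_2-u_1|+L_1|v_2-v_1|+L_2|z_2-z_1|$ for all $(x_i,u_i,v_i,z_i)\in\mathcal{D}_M$, $i=1,2$; (iii) $q:=L_0M_0+L_1M_1+L_2M_0M_2<1$. Then the problem $$u^{(4)}(x)=f\Big(x,u(x),u'(x),\int_0^1 k(x,t)u(t)\,dt\Big),\ 0<x<1,\qquad u(0)=u(1)=u''(0)=u''(1)=0$$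 has a unique solution $u\in C^4[0,1]$ satisfying $|u(x)|\le M_0M$ and $|u'(x)|\le M_1M$ for all $0\le x\le 1$.
   Context: $G_0$ is the Green function of $u''''=0$ with boundary conditions $u(0)=u''(0)=u(1)=u''(1)=0$, and $G_1=\partial G_0/\partial x$. The paper computes $M_0=5/384$ and $M_1=1/24$. *)

From Stdlib Require Import Reals.
From Coquelicot Require Import Coquelicot.
Open Scope R_scope.

Definition I01 (x : R) : Prop := 0 <= x <= 1.

(* Green function of u''''=0, u(0)=u''(0)=u(1)=u''(1)=0. *)
Definition G0 (x s : R) : R :=
  if Rle_dec s x then / 6 * (s * (x - 1) * (x ^ 2 - 2 * x + s ^ 2))
  else / 6 * (x * (s - 1) * (s ^ 2 - 2 * s + x ^ 2)).

(* G1 = dG0/dx, exactly as in the paper. *)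
Definition G1 (x s : R) : R :=
  if Rle_dec s x then / 6 * (s * (3 * x ^ 2 - 6 * x + s ^ 2 + 2))
  else / 6 * ((s - 1) * (3 * x ^ 2 - 2 * s + s ^ 2)).

(* max_{0<=x<=1} int_0^1 |K(x,s)| ds, realised as the supremum (attained,
   since the integrand is continuous in x). *)
Definition max_int_abs (K : R -> R -> R) : R :=
  real (Lub_Rbar (fun y => exists x, I01 x /\ y = RInt (fun s => Rabs (K x s)) 0 1)).

Definition M0 : R := max_int_abs G0.
Definition M1 : R := max_int_abs G1.
Definition M2 (k : R -> R -> R) : R := max_int_abs k.

Definition DM (k : R -> R -> R) (M x u v z : R) : Prop :=
  I01 x /\ Rabs u <= M0 * M /\ Rabs v <= M1 * M /\ Rabs z <= M0 * M2 k * M.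

Definition cont_on_square (k : R -> R -> R) : Prop :=
  forall x s, I01 x -> I01 s -> forall eps, 0 < eps -> exists delta, 0 < delta /\
    forall x' s', I01 x' -> I01 s' -> Rabs (x' - x) < delta -> Rabs (s' - s) < delta ->
      Rabs (k x' s' - k x s) < eps.

Definition cont_on4 (f : R -> R -> R -> R -> R) (D : R -> R -> R -> R -> Prop) : Prop :=
  forall x u v z, D x u v z -> forall eps, 0 < eps -> exists delta, 0 < delta /\
    forall x' u' v' z', D x' u' v' z' ->
      Rabs (x' - x) < delta -> Rabs (u' - u) < delta ->
      Rabs (v' - v) < delta -> Rabs (z' - z) < delta ->
      Rabs (f x' u' v' z' - f x u v z) < eps.

Definition is_deriv01 (g g' : R -> R) : Prop :=
  forall x, I01 x ->
    filterlim (fun y => (g y - g x) / (y - x))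
      (within (fun y => I01 y /\ y <> x) (locally x)) (locally (g' x)).

Definition cont01 (g : R -> R) : Prop :=
  forall x, I01 x -> filterlim g (within I01 (locally x)) (locally (g x)).

Definition C4_01 (u u1 u2 u3 u4 : R -> R) : Prop :=
  is_deriv01 u u1 /\ is_deriv01 u1 u2 /\ is_deriv01 u2 u3 /\ is_deriv01 u3 u4 /\
  cont01 u4.

Definition is_solution (f : R -> R -> R -> R -> R) (k : R -> R -> R) (M : R)
  (u u1 u2 u3 u4 : R -> R) : Prop :=
  C4_01 u u1 u2 u3 u4 /\
  (forall x, 0 < x < 1 -> u4 x = f x (u x) (u1 x) (RInt (fun t => k x t * u t) 0 1)) /\
  u 0 = 0 /\ u 1 = 0 /\ u2 0 = 0 /\ u2 1 = 0 /\
  (forall x, I01 x -> Rabs (u x) <= M0 * M /\ Rabs (u1 x) <= M1 * M).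

(* Writing g = u'''', the problem is equivalent to the fixed-point equation g = Phi g, where
   (Phi g)(x) = f(x, (U g)(x), (U g)'(x), int_0^1 k(x,t) (U g)(t) dt) and
   U g = int_0^1 G0(., s) g(s) ds solves u'''' = g with the boundary conditions.
   Since |U g| <= M0 sup|g| and |(U g)'| <= M1 sup|g|, Phi maps the continuous functions bounded
   by M into themselves, and the Lipschitz condition makes it a contraction of the sup-distance
   with constant q < 1, so Picard iteration gives a unique fixed point. Conversely, integrating
   twice from the conditions on u'' and twice more from those on u shows that every C^4 solution
   is U u'''', hence u'''' is that fixed point. *)

From Stdlib Require Import Reals Lra Lia Classical ClassicalEpsilon.
From Coquelicot Require Import Coquelicot.
Open Scope R_scope.

Lemma filterlim_within_iff (D : R -> Prop) (x l : R) (h : R -> R) :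
  filterlim h (within D (locally x)) (locally l) <->
  forall eps, 0 < eps -> exists d, 0 < d /\
    forall y, D y -> Rabs (y - x) < d -> Rabs (h y - l) < eps.
Proof.
  rewrite filterlim_locally. split.
  - intros H eps Heps. destruct (H (mkposreal eps Heps)) as [d Hd].
    exists d. split; [apply cond_pos|]. intros y Dy Hy. exact (Hd y Hy Dy).
  - intros H eps. destruct (H eps (cond_pos eps)) as [d [Hd H']].
    exists (mkposreal d Hd). intros y Hy Dy. exact (H' y Dy Hy).
Qed.

Lemma is_deriv01_iff F F' : is_deriv01 F F' <->
  forall x, I01 x -> forall eps, 0 < eps -> exists d, 0 < d /\
    forall y, I01 y -> y <> x -> Rabs (y - x) < d ->
      Rabs ((F y - F x) / (y - x) - F' x) < eps.
Proof.
  unfold is_deriv01. split; intros H x Hx.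
  - intros eps Heps.
    destruct (proj1 (filterlim_within_iff _ _ _ _) (H x Hx) eps Heps) as [d [Hd H']].
    exists d. split; auto.
  - apply filterlim_within_iff. intros eps Heps.
    destruct (H x Hx eps Heps) as [d [Hd H']].
    exists d. split; auto. intros y [Hy Hyx]. auto.
Qed.

Lemma cont01_iff g : cont01 g <->
  forall x, I01 x -> forall eps, 0 < eps -> exists d, 0 < d /\
    forall y, I01 y -> Rabs (y - x) < d -> Rabs (g y - g x) < eps.
Proof.
  unfold cont01. split; intros H x Hx; apply (filterlim_within_iff I01); auto.
Qed.

Lemma continuous_iff (g : R -> R) (x : R) : continuous g x <->
  forall eps, 0 < eps -> exists d, 0 < d /\
    forall y, Rabs (y - x) < d -> Rabs (g y - g x) < eps.
Proof.
  unfold continuous. rewrite filterlim_locally. split.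
  - intros H eps Heps. destruct (H (mkposreal eps Heps)) as [d Hd].
    exists d. split; [apply cond_pos|]. intros y Hy. exact (Hd y Hy).
  - intros H eps. destruct (H eps (cond_pos eps)) as [d [Hd H']].
    exists (mkposreal d Hd). intros y Hy. exact (H' y Hy).
Qed.

Definition continuousR (g : R -> R) := forall x, continuous g x.

Lemma continuousR_plus f g : continuousR f -> continuousR g -> continuousR (fun s => f s + g s).
Proof. intros Hf Hg x. exact (continuous_plus f g x (Hf x) (Hg x)). Qed.

Lemma continuousR_minus f g : continuousR f -> continuousR g -> continuousR (fun s => f s - g s).
Proof. intros Hf Hg x. exact (continuous_minus f g x (Hf x) (Hg x)). Qed.

Lemma continuousR_mult f g : continuousR f -> continuousR g -> continuousR (fun s => f s * g s).
Proof. intros Hf Hg x. exact (continuous_mult f g x (Hf x) (Hg x)). Qed.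

Lemma continuousR_const c : continuousR (fun _ => c).
Proof. intros x. apply continuous_const. Qed.

Lemma continuousR_derivable p : (forall x, ex_derive p x) -> continuousR p.
Proof. intros Hp x. exact (ex_derive_continuous p x (Hp x)). Qed.

Ltac continuousR_poly := apply continuousR_derivable; intros ?; auto_derive; exact I.

(* Coquelicot's integration and differentiation lemmas need continuity on all of R; composing
   with [clamp] extends a function continuous on [0,1] by constants. *)
Definition clamp x := Rmax 0 (Rmin 1 x).

Lemma clamp_I01 x : I01 (clamp x).
Proof. unfold clamp, I01, Rmax, Rmin. destruct (Rle_dec 1 x); destruct (Rle_dec 0 _); lra. Qed.

Lemma clamp_id x : I01 x -> clamp x = x.
Proof. unfold clamp, I01, Rmax, Rmin. destruct (Rle_dec 1 x); destruct (Rle_dec 0 _); lra. Qed.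

Lemma clamp_lipschitz x y : Rabs (clamp y - clamp x) <= Rabs (y - x).
Proof.
  unfold clamp, Rmax, Rmin.
  destruct (Rle_dec 1 x), (Rle_dec 1 y), (Rle_dec 0 x), (Rle_dec 0 y), (Rle_dec 0 1);
    apply Rabs_le; pose proof (Rle_abs (y - x)); pose proof (Rle_abs (- (y - x)));
    rewrite Rabs_Ropp in *; lra.
Qed.

Lemma continuousR_clamp_comp h : cont01 h -> continuousR (fun t => h (clamp t)).
Proof.
  rewrite cont01_iff. intros H x. apply continuous_iff. intros eps Heps.
  destruct (H (clamp x) (clamp_I01 x) eps Heps) as [d [Hd H']].
  exists d. split; auto. intros y Hy. apply H'; [apply clamp_I01|].
  eapply Rle_lt_trans; [apply clamp_lipschitz | exact Hy].
Qed.

Lemma cont01_continuousR g : continuousR g -> cont01 g.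
Proof.
  intros H. apply cont01_iff. intros x _ eps Heps.
  destruct (proj1 (continuous_iff g x) (H x) eps Heps) as [d [Hd H']].
  exists d. auto.
Qed.

Definition bounded01 (g : R -> R) (E : R) := forall s, 0 < s < 1 -> Rabs (g s) <= E.

Lemma bounded01_ge0 g E : bounded01 g E -> 0 <= E.
Proof. intros H. specialize (H (1/2) ltac:(lra)). pose proof (Rabs_pos (g (1/2))). lra. Qed.

Lemma bounded01_minus g h E F : bounded01 g E -> bounded01 h F ->
  bounded01 (fun s => g s - h s) (E + F).
Proof.
  intros Hg Hh s Hs. unfold Rminus. eapply Rle_trans; [apply Rabs_triang|].
  rewrite Rabs_Ropp. pose proof (Hg s Hs). pose proof (Hh s Hs). lra.
Qed.

Lemma ex_RInt_continuousR (f : R -> R) a b : continuousR f -> ex_RInt f a b.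
Proof. intros H. apply (@ex_RInt_continuous R_CompleteNormedModule). intros; apply H. Qed.

Lemma RInt_ext_R (f g : R -> R) a b :
  (forall x, Rmin a b < x < Rmax a b -> f x = g x) -> RInt f a b = RInt g a b.
Proof. apply RInt_ext. Qed.

Lemma RInt_linear2 (f h : R -> R) a b c1 c2 : ex_RInt f a b -> ex_RInt h a b ->
  RInt (fun s => c1 * f s + c2 * h s) a b = c1 * RInt f a b + c2 * RInt h a b.
Proof.
  intros Hf Hh.
  rewrite (RInt_plus (fun s => c1 * f s) (fun s => c2 * h s));
    [| exact (ex_RInt_scal f a b c1 Hf) | exact (ex_RInt_scal h a b c2 Hh)].
  exact (f_equal2 Rplus (RInt_scal f a b c1 Hf) (RInt_scal h a b c2 Hh)).
Qed.

Lemma RInt_minus_R (f h : R -> R) a b : ex_RInt f a b -> ex_RInt h a b ->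
  RInt (fun s => f s - h s) a b = RInt f a b - RInt h a b.
Proof. intros Hf Hh. exact (RInt_minus f h a b Hf Hh). Qed.

Lemma RInt_piecewise (F p q : R -> R) x : 0 <= x <= 1 -> ex_RInt p 0 x -> ex_RInt q x 1 ->
  (forall s, 0 < s < x -> F s = p s) -> (forall s, x < s < 1 -> F s = q s) ->
  ex_RInt F 0 1 /\ RInt F 0 1 = RInt p 0 x + RInt q x 1.
Proof.
  intros Hx Hp Hq H1 H2.
  assert (E1 : forall s, Rmin 0 x < s < Rmax 0 x -> p s = F s)
    by (rewrite Rmin_left, Rmax_right by lra; intros; symmetry; auto).
  assert (E2 : forall s, Rmin x 1 < s < Rmax x 1 -> q s = F s)
    by (rewrite Rmin_left, Rmax_right by lra; intros; symmetry; auto).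
  assert (F1 := ex_RInt_ext p F 0 x E1 Hp).
  assert (F2 := ex_RInt_ext q F x 1 E2 Hq).
  split; [exact (ex_RInt_Chasles F 0 x 1 F1 F2)|].
  rewrite <- (RInt_Chasles F 0 x 1 F1 F2), (RInt_ext p F 0 x E1), (RInt_ext q F x 1 E2).
  reflexivity.
Qed.

Lemma Rabs_RInt_mult_le (K g : R -> R) E : ex_RInt (fun s => K s * g s) 0 1 -> ex_RInt K 0 1 ->
  bounded01 g E ->
  Rabs (RInt (fun s => K s * g s) 0 1) <= RInt (fun s => Rabs (K s)) 0 1 * E.
Proof.
  intros HKg HK HE.
  assert (HaK := ex_RInt_norm K 0 1 HK).
  eapply Rle_trans; [apply abs_RInt_le; [lra | exact HKg]|].
  replace (RInt (fun s => Rabs (K s)) 0 1 * E) with (RInt (fun s => E * Rabs (K s)) 0 1)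
    by (rewrite Rmult_comm; exact (RInt_scal _ 0 1 E HaK)).
  apply RInt_le; [lra | exact (ex_RInt_norm _ 0 1 HKg) | exact (ex_RInt_scal _ 0 1 E HaK) |].
  intros s Hs. rewrite Rabs_mult, Rmult_comm.
  apply Rmult_le_compat_r; [apply Rabs_pos | auto].
Qed.

Definition wint (w g : R -> R) (a b : R) := RInt (fun s => w s * g s) a b.

Section WeightedIntegral.
Variables w g : R -> R.
Hypothesis w_cont : continuousR w.
Hypothesis g_cont : continuousR g.

Let wg_cont : continuousR (fun s => w s * g s).
Proof. exact (continuousR_mult w g w_cont g_cont). Qed.

Lemma is_derive_wint_upper a x : is_derive (fun b => wint w g a b) x (w x * g x).
Proof.
  apply (is_derive_RInt (fun s => w s * g s) (fun b => wint w g a b) a x); [| apply wg_cont].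
  apply filter_forall. intros b.
  apply (@RInt_correct R_CompleteNormedModule), ex_RInt_continuousR, wg_cont.
Qed.

Lemma is_derive_wint_lower b x : is_derive (fun a => wint w g a b) x (- (w x * g x)).
Proof.
  apply (is_derive_RInt' (fun s => w s * g s) (fun a => wint w g a b) x b); [| apply wg_cont].
  apply filter_forall. intros a.
  apply (@RInt_correct R_CompleteNormedModule), ex_RInt_continuousR, wg_cont.
Qed.

Lemma wint_minus h a b : continuousR h ->
  wint w (fun s => g s - h s) a b = wint w g a b - wint w h a b.
Proof.
  intros Hh. unfold wint. rewrite <- RInt_minus_R.
  - apply RInt_ext_R. intros; ring.
  - apply ex_RInt_continuousR, wg_cont.
  - apply ex_RInt_continuousR, continuousR_mult; auto.
Qed.

End WeightedIntegral.

Lemma wint_ext w g h a b : 0 <= a <= b -> b <= 1 -> (forall s, 0 < s < 1 -> g s = h s) ->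
  wint w g a b = wint w h a b.
Proof.
  intros Ha Hb H. unfold wint. apply RInt_ext_R.
  rewrite Rmin_left, Rmax_right by lra. intros s Hs. rewrite H; [reflexivity | lra].
Qed.

Lemma wint_point w g a : wint w g a a = 0.
Proof. exact (RInt_point a (fun s => w s * g s)). Qed.

(* For s <= x, G0(x,s) and G1(x,s) are combinations of s and s^3, for s > x of s^3 - 3s^2 + 2s
   and s - 1 (RInt_kernel_split), hence these four moments. *)
Definition lmom1 g x := wint (fun s => s) g 0 x.
Definition lmom3 g x := wint (fun s => s^3) g 0 x.
Definition rmom1 g x := wint (fun s => s - 1) g x 1.
Definition rmom3 g x := wint (fun s => s^3 - 3*s^2 + 2*s) g x 1.

Definition green g x := / 6 *
  ((x^3 - 3*x^2 + 2*x) * lmom1 g x + (x - 1) * lmom3 g x + x * rmom3 g x + x^3 * rmom1 g x).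

Definition green1 g x := / 6 *
  ((3*x^2 - 6*x + 2) * lmom1 g x + lmom3 g x + rmom3 g x + 3*x^2 * rmom1 g x).

Definition green2 g x := (x - 1) * lmom1 g x + x * rmom1 g x.

Definition green3 g x := lmom1 g x + rmom1 g x.

Section GreenDerivatives.
Variable g : R -> R.
Hypothesis g_cont : continuousR g.

Lemma is_derive_lmom1 (x : R) : is_derive (lmom1 g) x (x * g x).
Proof. exact (is_derive_wint_upper (fun s => s) g ltac:(continuousR_poly) g_cont 0 x). Qed.

Lemma is_derive_lmom3 (x : R) : is_derive (lmom3 g) x (x^3 * g x).
Proof. exact (is_derive_wint_upper (fun s => s^3) g ltac:(continuousR_poly) g_cont 0 x). Qed.

Lemma is_derive_rmom1 (x : R) : is_derive (rmom1 g) x (- ((x - 1) * g x)).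
Proof. exact (is_derive_wint_lower (fun s => s - 1) g ltac:(continuousR_poly) g_cont 1 x). Qed.

Lemma is_derive_rmom3 (x : R) : is_derive (rmom3 g) x (- ((x^3 - 3*x^2 + 2*x) * g x)).
Proof.
  exact (is_derive_wint_lower (fun s => s^3 - 3*s^2 + 2*s) g ltac:(continuousR_poly) g_cont 1 x).
Qed.

Lemma Derive_moments (x : R) :
  Derive (fun y => lmom1 g y) x = x * g x /\ Derive (fun y => lmom3 g y) x = x^3 * g x /\
  Derive (fun y => rmom1 g y) x = - ((x - 1) * g x) /\
  Derive (fun y => rmom3 g y) x = - ((x^3 - 3*x^2 + 2*x) * g x).
Proof.
  repeat split; apply is_derive_unique;
    [apply is_derive_lmom1 | apply is_derive_lmom3 | apply is_derive_rmom1 | apply is_derive_rmom3].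
Qed.

(* [auto_derive] treats the moments as unknown functions; [Derive_moments] supplies their
   derivatives. *)
Ltac derive_moments x :=
  auto_derive;
  [ repeat split;
    match goal with
    | |- ex_derive (fun y => lmom1 g y) x => exact (ex_intro _ _ (is_derive_lmom1 x))
    | |- ex_derive (fun y => lmom3 g y) x => exact (ex_intro _ _ (is_derive_lmom3 x))
    | |- ex_derive (fun y => rmom1 g y) x => exact (ex_intro _ _ (is_derive_rmom1 x))
    | |- ex_derive (fun y => rmom3 g y) x => exact (ex_intro _ _ (is_derive_rmom3 x))
    end
  | let D1 := fresh in let D2 := fresh in let D3 := fresh in let D4 := fresh in
    destruct (Derive_moments x) as (D1 & D2 & D3 & D4); rewrite ?D1, ?D2, ?D3, ?D4 ].

Lemma is_derive_green (x : R) : is_derive (green g) x (green1 g x).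
Proof. unfold green. derive_moments x. unfold green1. ring. Qed.

Lemma is_derive_green1 (x : R) : is_derive (green1 g) x (green2 g x).
Proof. unfold green1. derive_moments x. unfold green2. field. Qed.

Lemma is_derive_green2 (x : R) : is_derive (green2 g) x (green3 g x).
Proof. unfold green2. derive_moments x. unfold green3. ring. Qed.

Lemma is_derive_green3 (x : R) : is_derive (green3 g) x (g x).
Proof. unfold green3. derive_moments x. ring. Qed.

End GreenDerivatives.

Lemma green_at0 g : green g 0 = 0.
Proof. unfold green, lmom1, lmom3. rewrite !wint_point. ring. Qed.

Lemma green_at1 g : green g 1 = 0.
Proof. unfold green, rmom1, rmom3. rewrite !wint_point. ring. Qed.

Lemma green2_at0 g : green2 g 0 = 0.
Proof. unfold green2, lmom1. rewrite wint_point. ring. Qed.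

Lemma green2_at1 g : green2 g 1 = 0.
Proof. unfold green2, rmom1. rewrite wint_point. ring. Qed.

Lemma RInt_kernel_split K g x a b c d : 0 <= x <= 1 -> continuousR g ->
  (forall s, s <= x -> K s = a * s + b * s^3) ->
  (forall s, x < s -> K s = c * (s^3 - 3*s^2 + 2*s) + d * (s - 1)) ->
  ex_RInt (fun s => K s * g s) 0 1 /\
  RInt (fun s => K s * g s) 0 1
    = a * lmom1 g x + b * lmom3 g x + c * rmom3 g x + d * rmom1 g x :> R.
Proof.
  intros Hx Hg HKl HKr.
  assert (Hw : forall w, continuousR w -> continuousR (fun s => w s * g s))
    by (intros; apply continuousR_mult; auto).
  assert (Hcw : forall w e, continuousR w -> continuousR (fun s => e * (w s * g s)))
    by (intros; apply continuousR_mult; [apply continuousR_const | auto]).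
  destruct (RInt_piecewise (fun s => K s * g s)
              (fun s => a * (s * g s) + b * (s^3 * g s))
              (fun s => c * ((s^3 - 3*s^2 + 2*s) * g s) + d * ((s - 1) * g s)) x Hx)
    as [Hex Heq].
  - apply ex_RInt_continuousR, continuousR_plus; apply Hcw; continuousR_poly.
  - apply ex_RInt_continuousR, continuousR_plus; apply Hcw; continuousR_poly.
  - intros s Hs. rewrite HKl by lra. ring.
  - intros s Hs. rewrite HKr by lra. ring.
  - split; [exact Hex|].
    rewrite Heq, !RInt_linear2 by (apply ex_RInt_continuousR, Hw; continuousR_poly).
    unfold lmom1, lmom3, rmom1, rmom3, wint. ring.
Qed.

Lemma RInt_G0_green g x : continuousR g -> 0 <= x <= 1 ->
  ex_RInt (fun s => G0 x s * g s) 0 1 /\ RInt (fun s => G0 x s * g s) 0 1 = green g x :> R.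
Proof.
  intros Hg Hx.
  destruct (RInt_kernel_split (G0 x) g x ((x^3 - 3*x^2 + 2*x) / 6) ((x - 1) / 6) (x / 6) (x^3 / 6)
              Hx Hg) as [Hex Heq].
  - intros s Hs. unfold G0. destruct (Rle_dec s x); [field | lra].
  - intros s Hs. unfold G0. destruct (Rle_dec s x); [lra | field].
  - split; [exact Hex|]. rewrite Heq. unfold green. field.
Qed.

Lemma RInt_G1_green1 g x : continuousR g -> 0 <= x <= 1 ->
  ex_RInt (fun s => G1 x s * g s) 0 1 /\ RInt (fun s => G1 x s * g s) 0 1 = green1 g x :> R.
Proof.
  intros Hg Hx.
  destruct (RInt_kernel_split (G1 x) g x ((3*x^2 - 6*x + 2) / 6) (/ 6) (/ 6) (3*x^2 / 6)
              Hx Hg) as [Hex Heq].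
  - intros s Hs. unfold G1. destruct (Rle_dec s x); [field | lra].
  - intros s Hs. unfold G1. destruct (Rle_dec s x); [lra | field].
  - split; [exact Hex|]. rewrite Heq. unfold green1. field.
Qed.

Lemma continuousR_green g : continuousR g -> continuousR (green g).
Proof. intros Hg x. exact (ex_derive_continuous _ x (ex_intro _ _ (is_derive_green g Hg x))). Qed.

Lemma continuousR_green1 g : continuousR g -> continuousR (green1 g).
Proof. intros Hg x. exact (ex_derive_continuous _ x (ex_intro _ _ (is_derive_green1 g Hg x))). Qed.

Lemma green_minus g h x : continuousR g -> continuousR h ->
  green (fun s => g s - h s) x = green g x - green h x /\
  green1 (fun s => g s - h s) x = green1 g x - green1 h x.
Proof.
  intros Hg Hh. unfold green, green1, lmom1, lmom3, rmom1, rmom3.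
  rewrite !wint_minus by (auto; continuousR_poly). split; ring.
Qed.

Lemma green_ext g h x : (forall s, 0 < s < 1 -> g s = h s) -> I01 x ->
  green g x = green h x /\ green1 g x = green1 h x.
Proof.
  intros H [Hx0 Hx1]. unfold green, green1, lmom1, lmom3, rmom1, rmom3.
  rewrite !(wint_ext _ g h 0 x), !(wint_ext _ g h x 1) by (auto; lra). split; reflexivity.
Qed.

Definition int_abs_bounded (K : R -> R -> R) (B : R) :=
  forall y, I01 y -> ex_RInt (K y) 0 1 /\ RInt (fun s => Rabs (K y s)) 0 1 <= B.

Lemma RInt01_le_const (f : R -> R) B : ex_RInt f 0 1 -> (forall s, 0 < s < 1 -> f s <= B) ->
  RInt f 0 1 <= B.
Proof.
  intros Hf HB. replace B with (RInt (fun _ => B) 0 1).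
  - apply RInt_le; auto; [lra | apply ex_RInt_const].
  - rewrite RInt_const. unfold scal; simpl; unfold mult; simpl. ring.
Qed.

Lemma max_int_abs_ub K B : int_abs_bounded K B ->
  forall x, I01 x -> RInt (fun s => Rabs (K x s)) 0 1 <= max_int_abs K.
Proof.
  intros HB x Hx. unfold max_int_abs.
  set (E := fun y => exists x, I01 x /\ y = RInt (fun s => Rabs (K x s)) 0 1).
  destruct (Lub_Rbar_correct E) as [ub lub].
  assert (Lfin : Rbar_le (Lub_Rbar E) (Finite B)).
  { apply lub. intros y [z [Hz ->]]. apply HB, Hz. }
  specialize (ub _ (ex_intro _ x (conj Hx eq_refl))).
  change (RInt (fun s => Rabs (K x s)) 0 1 <= real (Lub_Rbar E)).
  destruct (Lub_Rbar E); simpl in *; [exact ub | contradiction | contradiction].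
Qed.

Lemma max_int_abs_ge0 K B : int_abs_bounded K B -> 0 <= max_int_abs K.
Proof.
  intros HB. assert (H0 : I01 0) by (unfold I01; lra).
  apply Rle_trans with (RInt (fun s => Rabs (K 0 s)) 0 1).
  - apply RInt_ge_0; [lra | apply ex_RInt_norm, HB, H0 | intros; apply Rabs_pos].
  - exact (max_int_abs_ub K B HB 0 H0).
Qed.

Lemma Rabs_RInt_kernel_le K B g E x : int_abs_bounded K B -> I01 x ->
  ex_RInt (fun s => K x s * g s) 0 1 -> bounded01 g E ->
  Rabs (RInt (fun s => K x s * g s) 0 1) <= max_int_abs K * E.
Proof.
  intros HB Hx Hex HE.
  eapply Rle_trans; [apply (Rabs_RInt_mult_le (K x) g E Hex (proj1 (HB x Hx)) HE)|].
  apply Rmult_le_compat_r; [exact (bounded01_ge0 g E HE) | exact (max_int_abs_ub K B HB x Hx)].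
Qed.

Lemma Rabs_G0_le x s : I01 x -> I01 s -> Rabs (G0 x s) <= 2.
Proof.
  unfold I01, G0. intros Hx Hs. apply Rabs_le. destruct (Rle_dec s x).
  - assert (0 <= s * (1 - x) <= 1) by nra. assert (-1 <= x^2 - 2*x + s^2 <= 1) by nra.
    split; nra.
  - assert (0 <= x * (1 - s) <= 1) by nra. assert (-1 <= s^2 - 2*s + x^2 <= 1) by nra.
    split; nra.
Qed.

Lemma Rabs_G1_le x s : I01 x -> I01 s -> Rabs (G1 x s) <= 2.
Proof.
  unfold I01, G1. intros Hx Hs. apply Rabs_le. destruct (Rle_dec s x).
  - assert (-4 <= 3 * x^2 - 6 * x + s^2 + 2 <= 4) by nra. split; nra.
  - assert (-4 <= 3 * x^2 - 2 * s + s^2 <= 4) by nra. split; nra.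
Qed.

Lemma int_abs_bounded_G0 : int_abs_bounded G0 2.
Proof.
  intros y Hy.
  assert (Hex : ex_RInt (G0 y) 0 1).
  { apply (ex_RInt_ext (fun s => G0 y s * 1)); [intros; apply Rmult_1_r|].
    apply (RInt_G0_green (fun _ => 1) y (continuousR_const 1) Hy). }
  split; [exact Hex|]. apply RInt01_le_const; [exact (ex_RInt_norm _ 0 1 Hex)|].
  intros s Hs. apply Rabs_G0_le; unfold I01 in *; lra.
Qed.

Lemma int_abs_bounded_G1 : int_abs_bounded G1 2.
Proof.
  intros y Hy.
  assert (Hex : ex_RInt (G1 y) 0 1).
  { apply (ex_RInt_ext (fun s => G1 y s * 1)); [intros; apply Rmult_1_r|].
    apply (RInt_G1_green1 (fun _ => 1) y (continuousR_const 1) Hy). }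
  split; [exact Hex|]. apply RInt01_le_const; [exact (ex_RInt_norm _ 0 1 Hex)|].
  intros s Hs. apply Rabs_G1_le; unfold I01 in *; lra.
Qed.

Lemma Rabs_green_le g E x : continuousR g -> bounded01 g E -> I01 x ->
  Rabs (green g x) <= M0 * E.
Proof.
  intros Hg HE Hx. destruct (RInt_G0_green g x Hg Hx) as [Hex <-].
  exact (Rabs_RInt_kernel_le G0 2 g E x int_abs_bounded_G0 Hx Hex HE).
Qed.

Lemma Rabs_green1_le g E x : continuousR g -> bounded01 g E -> I01 x ->
  Rabs (green1 g x) <= M1 * E.
Proof.
  intros Hg HE Hx. destruct (RInt_G1_green1 g x Hg Hx) as [Hex <-].
  exact (Rabs_RInt_kernel_le G1 2 g E x int_abs_bounded_G1 Hx Hex HE).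
Qed.

Lemma cont01_RInt_param (h : R -> R -> R) :
  (forall x, I01 x -> ex_RInt (h x) 0 1) ->
  (forall x0, I01 x0 -> forall eps, 0 < eps -> exists d, 0 < d /\
     forall x s, I01 x -> 0 < s < 1 -> Rabs (x - x0) < d -> Rabs (h x s - h x0 s) <= eps) ->
  cont01 (fun x => RInt (h x) 0 1).
Proof.
  intros Hex Hunif. apply cont01_iff. intros x0 Hx0 eps Heps.
  destruct (Hunif x0 Hx0 (eps / 2) ltac:(lra)) as [d [Hd H]].
  exists d. split; [exact Hd|]. intros x Hx Hxd.
  assert (Hdiff := ex_RInt_minus _ _ 0 1 (Hex x Hx) (Hex x0 Hx0)).
  rewrite <- RInt_minus_R by auto.
  eapply Rle_lt_trans; [apply abs_RInt_le; [lra | exact Hdiff]|].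
  apply Rle_lt_trans with (eps / 2); [|lra].
  apply RInt01_le_const; [exact (ex_RInt_norm _ 0 1 Hdiff)|]. intros s Hs. exact (H x s Hx Hs Hxd).
Qed.

Definition kint (k : R -> R -> R) (v : R -> R) (x : R) := RInt (fun t => k x t * v t) 0 1.

Section Kernel.
Variable k : R -> R -> R.
Hypothesis k_cont : cont_on_square k.

(* Joint continuity gives the estimate for s near each t; Cousin's lemma
   ([compactness_value_1d]) makes it uniform in s. *)
Lemma kernel_unif_cont x0 : I01 x0 -> forall eps, 0 < eps -> exists d, 0 < d /\
  forall x s, I01 x -> I01 s -> Rabs (x - x0) < d -> Rabs (k x s - k x0 s) < eps.
Proof.
  intros Hx0 eps Heps.
  assert (Hloc : forall t, exists d : posreal, I01 t -> forall x s, I01 x -> I01 s ->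
            Rabs (x - x0) < d -> Rabs (s - t) < d -> Rabs (k x s - k x0 s) < eps).
  { intros t. destruct (classic (I01 t)) as [Ht|Ht]; [|exists (mkposreal 1 Rlt_0_1); tauto].
    destruct (k_cont x0 t Hx0 Ht (eps / 2) ltac:(lra)) as [d [Hd H]].
    exists (mkposreal d Hd). simpl. intros _ x s Hx Hs Hxd Hsd.
    assert (H1 := H x s Hx Hs Hxd Hsd).
    assert (H2 := H x0 s Hx0 Hs ltac:(rewrite Rminus_eq_0, Rabs_R0; exact Hd) Hsd).
    replace (k x s - k x0 s) with ((k x s - k x0 t) - (k x0 s - k x0 t)) by ring.
    eapply Rle_lt_trans; [apply Rabs_triang|]. rewrite Rabs_Ropp. lra. }
  destruct (choice _ Hloc) as [delta Hdelta].
  destruct (compactness_value_1d 0 1 delta) as [d Hd].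
  exists d. split; [apply cond_pos|]. intros x s Hx Hs Hxd.
  apply NNPP. intros Hfalse. apply (Hd s Hs). intros [t [Ht [Hst Hdt]]].
  apply Hfalse, (Hdelta t Ht x s Hx Hs); lra.
Qed.

Lemma continuousR_kernel_row x : I01 x -> continuousR (fun t => k x (clamp t)).
Proof.
  intros Hx. apply continuousR_clamp_comp, cont01_iff. intros s Hs eps Heps.
  destruct (k_cont x s Hx Hs eps Heps) as [d [Hd H]].
  exists d. split; [exact Hd|]. intros y Hy Hyd.
  apply H; auto. rewrite Rminus_eq_0, Rabs_R0. exact Hd.
Qed.

Lemma ex_RInt_kernel_mult x v : I01 x -> continuousR v -> ex_RInt (fun t => k x t * v t) 0 1.
Proof.
  intros Hx Hv. apply (ex_RInt_ext (fun t => k x (clamp t) * v t)).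
  - rewrite Rmin_left, Rmax_right by lra. intros t Ht.
    rewrite clamp_id; [reflexivity | unfold I01; lra].
  - apply ex_RInt_continuousR, continuousR_mult; auto. apply continuousR_kernel_row, Hx.
Qed.

Lemma int_abs_bounded_kernel : exists B, int_abs_bounded k B.
Proof.
  assert (Hrow : forall x, I01 x -> ex_RInt (k x) 0 1).
  { intros x Hx. apply (ex_RInt_ext (fun t => k x t * 1)); [intros; apply Rmult_1_r|].
    exact (ex_RInt_kernel_mult x _ Hx (continuousR_const 1)). }
  set (F := fun x => RInt (fun s => Rabs (k x s)) 0 1).
  assert (HF : cont01 F).
  { apply cont01_RInt_param; [intros; apply ex_RInt_norm, Hrow; auto|].
    intros x0 Hx0 eps Heps. destruct (kernel_unif_cont x0 Hx0 eps Heps) as [d [Hd H]].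
    exists d. split; [exact Hd|]. intros x s Hx Hs Hxd.
    eapply Rle_trans; [apply Rabs_triang_inv2|]. left. apply H; auto. unfold I01; lra. }
  destruct (continuity_ab_maj (fun x => F (clamp x)) 0 1 ltac:(lra)) as [xm [Hxm _]].
  { intros c _. apply continuity_pt_filterlim, continuousR_clamp_comp, HF. }
  exists (F (clamp xm)). intros y Hy. split; [exact (Hrow y Hy)|].
  rewrite <- (clamp_id y Hy). exact (Hxm y Hy).
Qed.

Lemma M2_ge0 : 0 <= M2 k.
Proof. destruct int_abs_bounded_kernel as [B HB]. exact (max_int_abs_ge0 k B HB). Qed.

Lemma Rabs_kint_le v c x : continuousR v -> bounded01 v c -> I01 x ->
  Rabs (kint k v x) <= M2 k * c.
Proof.
  intros Hv Hc Hx. destruct int_abs_bounded_kernel as [B HB].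
  exact (Rabs_RInt_kernel_le k B v c x HB Hx (ex_RInt_kernel_mult x v Hx Hv) Hc).
Qed.

Lemma kint_minus v1 v2 x : continuousR v1 -> continuousR v2 -> I01 x ->
  kint k v1 x - kint k v2 x = kint k (fun t => v1 t - v2 t) x.
Proof.
  intros H1 H2 Hx. unfold kint.
  rewrite <- RInt_minus_R by (apply ex_RInt_kernel_mult; auto).
  apply RInt_ext_R. intros; ring.
Qed.

Lemma cont01_kint v c : continuousR v -> bounded01 v c -> cont01 (kint k v).
Proof.
  intros Hv Hc. apply cont01_RInt_param with (h := fun x t => k x t * v t).
  - intros x Hx. exact (ex_RInt_kernel_mult x v Hx Hv).
  - assert (c0 := bounded01_ge0 v c Hc).
    intros x0 Hx0 eps Heps.
    destruct (kernel_unif_cont x0 Hx0 (eps / (c + 1))) as [d [Hd H]].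
    { apply Rdiv_lt_0_compat; lra. }
    exists d. split; [exact Hd|]. intros x s Hx Hs Hxd.
    assert (Hks : Rabs (k x s - k x0 s) <= eps / (c + 1))
      by (left; apply H; auto; unfold I01; lra).
    replace (k x s * v s - k x0 s * v s) with ((k x s - k x0 s) * v s) by ring.
    rewrite Rabs_mult.
    apply Rle_trans with (eps / (c + 1) * c).
    + apply Rmult_le_compat; auto using Rabs_pos.
    + apply (Rmult_le_reg_r (c + 1)); [lra|]. field_simplify; nra.
Qed.

End Kernel.

Section Geometric.
Variable q : R.
Hypothesis q_range : 0 <= q < 1.

Lemma is_lim_seq_geom_scal C : is_lim_seq (fun n => C * q ^ n) 0.
Proof.
  replace (Finite 0) with (Rbar_mult C 0) by (simpl; f_equal; ring).
  apply is_lim_seq_scal_l, is_lim_seq_geom. rewrite Rabs_pos_eq; lra.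
Qed.

Lemma geom_scal_eventually_lt C eps : 0 < eps -> exists n, C * q ^ n < eps.
Proof.
  intros Heps.
  destruct (proj2 (is_lim_seq_spec _ _) (is_lim_seq_geom_scal C) (mkposreal eps Heps)) as [N HN].
  exists N. specialize (HN N (Nat.le_refl N)). simpl in HN.
  rewrite Rminus_0_r in HN. pose proof (Rle_abs (C * q ^ N)). lra.
Qed.

Lemma geom_scal_null a K : (forall n, Rabs a <= K * q ^ n) -> a = 0.
Proof.
  intros H.
  assert (Hle := is_lim_seq_le _ _ _ _ H (is_lim_seq_const (Rabs a)) (is_lim_seq_geom_scal K)).
  simpl in Hle. destruct (Req_dec a 0) as [|Ha]; [assumption|].
  pose proof (Rabs_pos_lt a Ha). lra.
Qed.

Lemma geometric_tail_le (hs : nat -> R -> R) B :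
  (forall n x, Rabs (hs (S n) x - hs n x) <= B * q ^ n) ->
  forall n p x, Rabs (hs (p + n)%nat x - hs n x) <= B / (1 - q) * q ^ n.
Proof.
  intros Hstep n p x.
  assert (B0 : 0 <= B).
  { pose proof (Rabs_pos (hs 1%nat x - hs 0%nat x)). pose proof (Hstep 0%nat x).
    rewrite pow_O in *. lra. }
  set (C := B / (1 - q)).
  apply Rle_trans with (C * q ^ n * (1 - q ^ p)).
  - induction p as [|p IH].
    + simpl. rewrite Rminus_eq_0, Rabs_R0. right; ring.
    + change (hs (S p + n)%nat x) with (hs (S (p + n)) x).
      replace (hs (S (p + n)) x - hs n x)
        with ((hs (S (p + n)) x - hs (p + n)%nat x) + (hs (p + n)%nat x - hs n x)) by ring.
      eapply Rle_trans; [apply Rabs_triang|].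
      assert (Hs := Hstep (p + n)%nat x). rewrite pow_add in Hs.
      replace (C * q ^ n * (1 - q ^ S p)) with (B * (q ^ p * q ^ n) + C * q ^ n * (1 - q ^ p))
        by (unfold C; simpl; field; lra).
      lra.
  - assert (0 <= C * q ^ n) by (apply Rmult_le_pos; [apply Rdiv_le_0_compat|apply pow_le]; lra).
    pose proof (pow_le q p (proj1 q_range)). nra.
Qed.

Lemma geometric_cauchy_limit (hs : nat -> R -> R) C :
  (forall n p x, Rabs (hs (p + n)%nat x - hs n x) <= C * q ^ n) ->
  exists h, forall n x, Rabs (h x - hs n x) <= C * q ^ n.
Proof.
  intros Htail.
  assert (Hcv : forall x, ex_finite_lim_seq (fun n => hs n x)).
  { intros x. apply ex_lim_seq_cauchy_corr. intros eps.
    destruct (geom_scal_eventually_lt C (eps / 2) ltac:(destruct eps; simpl; lra)) as [N HN].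
    exists N. intros n m Hn Hm.
    assert (A := Htail N (n - N)%nat x). assert (B := Htail N (m - N)%nat x).
    replace (n - N + N)%nat with n in A by lia. replace (m - N + N)%nat with m in B by lia.
    replace (hs n x - hs m x) with ((hs n x - hs N x) - (hs m x - hs N x)) by ring.
    eapply Rle_lt_trans; [apply Rabs_triang|]. rewrite Rabs_Ropp. lra. }
  exists (fun x => Lim_seq (fun n => hs n x)). intros n x.
  destruct (Hcv x) as [l Hl]. rewrite (is_lim_seq_unique _ _ Hl). simpl.
  assert (Hdiff : is_lim_seq (fun m => Rabs (hs (m + n)%nat x - hs n x)) (Rabs (l - hs n x))).
  { apply (is_lim_seq_abs _ (Finite (l - hs n x))), is_lim_seq_minus'.
    - exact (proj1 (is_lim_seq_incr_n (fun m => hs m x) n l) Hl).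
    - apply is_lim_seq_const. }
  exact (is_lim_seq_le _ _ _ _ (fun m => Htail n m x) Hdiff (is_lim_seq_const _)).
Qed.

End Geometric.

Section Contraction.
Variable P : (R -> R) -> Prop.
Variable T : (R -> R) -> R -> R.
Variable q : R.
Hypothesis q_range : 0 <= q < 1.
Hypothesis T_contraction : forall g1 g2 E, P g1 -> P g2 ->
  bounded01 (fun s => g1 s - g2 s) E -> forall x, Rabs (T g1 x - T g2 x) <= q * E.

Lemma contraction_fixpoint_unique g h B : P g -> P h -> bounded01 (fun s => g s - h s) B ->
  (forall s, 0 < s < 1 -> T g s = g s) -> (forall s, 0 < s < 1 -> T h s = h s) ->
  forall s, 0 < s < 1 -> g s = h s.
Proof.
  intros Pg Ph HB Fg Fh.
  assert (Hn : forall n, bounded01 (fun s => g s - h s) (B * q ^ n)).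
  { induction n as [|n IH]; intros s Hs.
    - rewrite pow_O, Rmult_1_r. exact (HB s Hs).
    - rewrite <- (Fg s Hs), <- (Fh s Hs).
      eapply Rle_trans; [exact (T_contraction g h _ Pg Ph IH s)|]. simpl. right; ring. }
  intros s Hs. apply Rminus_diag_uniq, (geom_scal_null q q_range _ B). intros n. exact (Hn n s Hs).
Qed.

Hypothesis P_T : forall g, P g -> P (T g).
Hypothesis P_closed : forall h,
  (forall eps, 0 < eps -> exists g, P g /\ forall x, Rabs (h x - g x) <= eps) -> P h.

Lemma contraction_fixpoint g0 B : P g0 -> (forall x, Rabs (T g0 x - g0 x) <= B) ->
  exists h, P h /\ forall x, T h x = h x.
Proof.
  intros Pg0 HB.
  set (hs := fun n => Nat.iter n T g0).
  assert (Phs : forall n, P (hs n)) by (induction n; simpl; auto).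
  assert (Hstep : forall n x, Rabs (hs (S n) x - hs n x) <= B * q ^ n).
  { induction n as [|n IH]; intros x.
    - rewrite pow_O, Rmult_1_r. exact (HB x).
    - eapply Rle_trans; [apply (T_contraction (hs (S n)) (hs n)); auto; intros s _; apply IH|].
      simpl. right; ring. }
  set (C := B / (1 - q)).
  destruct (geometric_cauchy_limit q q_range hs C (geometric_tail_le q q_range hs B Hstep))
    as [h Hh].
  assert (Ph : P h).
  { apply P_closed. intros eps Heps.
    destruct (geom_scal_eventually_lt q q_range C eps Heps) as [n Hn].
    exists (hs n). split; [apply Phs|]. intros x. specialize (Hh n x). lra. }
  exists h. split; [exact Ph|]. intros x.
  apply Rminus_diag_uniq, (geom_scal_null q q_range _ (2 * C * q)). intros n.
  assert (A := T_contraction h (hs n) (C * q ^ n) Ph (Phs n) (fun s _ => Hh n s) x).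
  assert (B' := Hh (S n) x). change (hs (S n) x) with (T (hs n) x) in B'.
  replace (T h x - h x) with ((T h x - T (hs n) x) - (h x - T (hs n) x)) by ring.
  eapply Rle_trans; [apply Rabs_triang|]. rewrite Rabs_Ropp.
  replace (2 * C * q * q ^ n) with (q * (C * q ^ n) + C * q ^ S n) by (simpl; ring).
  lra.
Qed.

End Contraction.

Lemma is_deriv01_of_is_derive F F' : (forall x, is_derive F x (F' x)) -> is_deriv01 F F'.
Proof.
  intros H. apply is_deriv01_iff. intros x _ eps Heps.
  destruct (proj1 (is_derive_Reals F x (F' x)) (H x) eps Heps) as [d Hd].
  exists d. split; [apply cond_pos|]. intros y _ Hyx Hyd.
  specialize (Hd (y - x)). replace (x + (y - x)) with y in Hd by ring. apply Hd; lra.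
Qed.

Lemma is_deriv01_interior F F' x : is_deriv01 F F' -> 0 < x < 1 -> is_derive F x (F' x).
Proof.
  intros HF Hx. apply is_derive_Reals. intros eps Heps.
  destruct (proj1 (is_deriv01_iff F F') HF x ltac:(unfold I01; lra) eps Heps) as [d [Hd H]].
  assert (Hr : 0 < Rmin d (Rmin x (1 - x))) by (repeat apply Rmin_glb_lt; lra).
  exists (mkposreal _ Hr). simpl. intros h Hh0 Hh.
  pose proof (Rmin_l d (Rmin x (1 - x))). pose proof (Rmin_r d (Rmin x (1 - x))).
  pose proof (Rmin_l x (1 - x)). pose proof (Rmin_r x (1 - x)).
  pose proof (Rle_abs h). pose proof (Rle_abs (- h)). rewrite Rabs_Ropp in *.
  specialize (H (x + h)). replace (x + h - x) with h in H by ring.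
  apply H; [unfold I01; lra | lra | lra].
Qed.

Lemma is_deriv01_cont01 F F' : is_deriv01 F F' -> cont01 F.
Proof.
  rewrite is_deriv01_iff, cont01_iff. intros H x Hx eps Heps.
  destruct (H x Hx 1 Rlt_0_1) as [d [Hd Hdq]].
  set (L := Rabs (F' x) + 1).
  assert (HL : 0 < L) by (unfold L; pose proof (Rabs_pos (F' x)); lra).
  exists (Rmin d (eps / L)). split; [apply Rmin_glb_lt; [lra | apply Rdiv_lt_0_compat; lra]|].
  intros y Hy Hyd. destruct (Req_dec y x) as [->|Hyx]; [rewrite Rminus_eq_0, Rabs_R0; lra|].
  pose proof (Rmin_l d (eps / L)). pose proof (Rmin_r d (eps / L)).
  assert (Hq : Rabs ((F y - F x) / (y - x)) <= L).
  { specialize (Hdq y Hy Hyx ltac:(lra)).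
    pose proof (Rabs_triang_inv ((F y - F x) / (y - x)) (F' x)). unfold L. lra. }
  replace (F y - F x) with ((F y - F x) / (y - x) * (y - x)) by (field; lra).
  rewrite Rabs_mult.
  apply Rle_lt_trans with (L * Rabs (y - x)); [apply Rmult_le_compat_r; auto using Rabs_pos|].
  apply (Rmult_lt_reg_r (/ L)); [apply Rinv_0_lt_compat, HL|].
  replace (L * Rabs (y - x) * / L) with (Rabs (y - x)) by (field; lra).
  exact (Rlt_le_trans _ _ _ Hyd (Rmin_r _ _)).
Qed.

(* Extending by [clamp] turns one-sided continuity at 0 and 1 into continuity, so the mean value
   theorem applies on [0, x]. *)
Lemma is_deriv01_eq_const F F' G G' : is_deriv01 F F' -> is_deriv01 G G' ->
  (forall x, I01 x -> F' x = G' x) -> forall x, I01 x -> F x - G x = F 0 - G 0.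
Proof.
  intros HF HG HFG x Hx.
  set (D := fun t => F (clamp t) - G (clamp t)).
  destruct (MVT_gen D 0 x (fun _ => 0)) as [c [_ Hc]].
  - rewrite Rmin_left, Rmax_right by (unfold I01 in Hx; lra). intros t Ht.
    assert (Ht1 : 0 < t < 1) by (unfold I01 in Hx; lra).
    apply (is_derive_ext_loc (fun y => F y - G y)).
    + assert (Hr : 0 < Rmin t (1 - t)) by (apply Rmin_glb_lt; lra).
      exists (mkposreal _ Hr). intros y Hy. change (Rabs (y - t) < Rmin t (1 - t)) in Hy.
      pose proof (Rmin_l t (1 - t)). pose proof (Rmin_r t (1 - t)).
      apply Rabs_lt_between' in Hy. unfold D. rewrite clamp_id; [reflexivity | unfold I01; lra].
    + replace 0 with (F' t - G' t) by (rewrite HFG; [ring | unfold I01; lra]).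
      apply (is_derive_minus F G); apply is_deriv01_interior; auto.
  - intros t _. apply continuity_pt_filterlim.
    apply continuousR_minus; apply continuousR_clamp_comp;
      [exact (is_deriv01_cont01 F F' HF) | exact (is_deriv01_cont01 G G' HG)].
  - unfold D in Hc. rewrite !clamp_id in Hc by (auto; unfold I01; lra). lra.
Qed.

Lemma is_deriv01_plus_linear F F' c :
  is_deriv01 F F' -> is_deriv01 (fun x => F x + c * x) (fun x => F' x + c).
Proof.
  rewrite !is_deriv01_iff. intros H x Hx eps Heps.
  destruct (H x Hx eps Heps) as [d [Hd H']]. exists d. split; [exact Hd|].
  intros y Hy Hyx Hyd.
  replace ((F y + c * y - (F x + c * x)) / (y - x) - (F' x + c))
    with ((F y - F x) / (y - x) - F' x) by (field; lra).
  auto.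
Qed.

Lemma is_deriv01_bvp2 p p1 p2 r r1 r2 :
  is_deriv01 p p1 -> is_deriv01 p1 p2 -> is_deriv01 r r1 -> is_deriv01 r1 r2 ->
  (forall x, I01 x -> p2 x = r2 x) -> p 0 = r 0 -> p 1 = r 1 ->
  forall x, I01 x -> p x = r x /\ p1 x = r1 x.
Proof.
  intros Hp Hp1 Hr Hr1 H2 H0 H1.
  set (c := p1 0 - r1 0).
  assert (E1 : forall x, I01 x -> p1 x = r1 x + c).
  { intros x Hx. pose proof (is_deriv01_eq_const _ _ _ _ Hp1 Hr1 H2 x Hx). unfold c. lra. }
  assert (E0 := is_deriv01_eq_const _ _ _ _ Hp (is_deriv01_plus_linear r r1 c Hr) E1).
  assert (c0 : c = 0) by (specialize (E0 1 ltac:(unfold I01; lra)); lra).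
  intros x Hx. specialize (E0 x Hx). specialize (E1 x Hx). rewrite c0 in E0, E1. lra.
Qed.

Lemma C4_bvp_green w w1 w2 w3 w4 : C4_01 w w1 w2 w3 w4 ->
  w 0 = 0 -> w 1 = 0 -> w2 0 = 0 -> w2 1 = 0 ->
  forall x, I01 x ->
    w x = green (fun t => w4 (clamp t)) x /\ w1 x = green1 (fun t => w4 (clamp t)) x.
Proof.
  intros (D0 & D1 & D2 & D3 & C4) B0 B1 B20 B21.
  set (g := fun t => w4 (clamp t)).
  assert (Hg : continuousR g) by exact (continuousR_clamp_comp w4 C4).
  assert (W2 := is_deriv01_bvp2 w2 w3 w4 (green2 g) (green3 g) g D2 D3
    (is_deriv01_of_is_derive _ _ (is_derive_green2 g Hg))
    (is_deriv01_of_is_derive _ _ (is_derive_green3 g Hg))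
    (fun x Hx => eq_sym (f_equal w4 (clamp_id x Hx)))
    ltac:(rewrite B20, green2_at0; reflexivity) ltac:(rewrite B21, green2_at1; reflexivity)).
  exact (is_deriv01_bvp2 w w1 w2 (green g) (green1 g) (green2 g) D0 D1
    (is_deriv01_of_is_derive _ _ (is_derive_green g Hg))
    (is_deriv01_of_is_derive _ _ (is_derive_green1 g Hg))
    (fun x Hx => proj1 (W2 x Hx))
    ltac:(rewrite B0, green_at0; reflexivity) ltac:(rewrite B1, green_at1; reflexivity)).
Qed.

(* Bounds are only imposed on (0,1), where the equation controls the fourth derivative of a
   solution. *)
Definition admissible (M : R) (g : R -> R) := continuousR g /\ bounded01 g M.

Lemma admissible_closed M h :
  (forall eps, 0 < eps -> exists g, admissible M g /\ forall x, Rabs (h x - g x) <= eps) ->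
  admissible M h.
Proof.
  intros H. split.
  - intros x. apply continuous_iff. intros eps Heps.
    destruct (H (eps / 4) ltac:(lra)) as [g [[Hg _] Hhg]].
    destruct (proj1 (continuous_iff g x) (Hg x) (eps / 4) ltac:(lra)) as [d [Hd Hgd]].
    exists d. split; [exact Hd|]. intros y Hy.
    replace (h y - h x) with ((h y - g y) + (g y - g x) - (h x - g x)) by ring.
    eapply Rle_lt_trans; [apply Rabs_triang|]. rewrite Rabs_Ropp.
    pose proof (Rabs_triang (h y - g y) (g y - g x)). pose proof (Hgd y Hy).
    pose proof (Hhg x). pose proof (Hhg y). lra.
  - intros s Hs. apply le_epsilon. intros eps Heps.
    destruct (H eps Heps) as [g [[_ Hg] Hhg]].
    pose proof (Rabs_triang_inv (h s) (g s)). pose proof (Hg s Hs). pose proof (Hhg s). lra.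
Qed.

Definition Phi (k : R -> R -> R) (f : R -> R -> R -> R -> R) (g : R -> R) (x : R) :=
  let y := clamp x in f y (green g y) (green1 g y) (kint k (green g) y).

Section Operator.
Variables (k : R -> R -> R) (f : R -> R -> R -> R -> R) (M L0 L1 L2 : R).
Hypothesis k_cont : cont_on_square k.
Hypothesis f_cont : cont_on4 f (DM k M).
Hypothesis f_bound : forall x u v z, DM k M x u v z -> Rabs (f x u v z) <= M.
Hypothesis f_lipschitz : forall x1 u1 v1 z1 x2 u2 v2 z2, DM k M x1 u1 v1 z1 -> DM k M x2 u2 v2 z2 ->
  Rabs (f x2 u2 v2 z2 - f x1 u1 v1 z1)
    <= L0 * Rabs (u2 - u1) + L1 * Rabs (v2 - v1) + L2 * Rabs (z2 - z1).
Hypotheses (L0_ge0 : 0 <= L0) (L1_ge0 : 0 <= L1) (L2_ge0 : 0 <= L2).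

Lemma green_in_DM g x : admissible M g -> I01 x ->
  DM k M x (green g x) (green1 g x) (kint k (green g) x).
Proof.
  intros [Hg HM] Hx. split; [exact Hx|].
  split; [exact (Rabs_green_le g M x Hg HM Hx)|].
  split; [exact (Rabs_green1_le g M x Hg HM Hx)|].
  replace (M0 * M2 k * M) with (M2 k * (M0 * M)) by ring.
  apply Rabs_kint_le; auto; [apply continuousR_green, Hg|].
  intros s Hs. apply Rabs_green_le; auto. unfold I01; lra.
Qed.

Lemma Rabs_Phi_le g x : admissible M g -> Rabs (Phi k f g x) <= M.
Proof. intros Hg. apply f_bound, green_in_DM, clamp_I01. exact Hg. Qed.

Lemma admissible_Phi g : admissible M g -> admissible M (Phi k f g).
Proof.
  intros Hadm. split; [|intros s _; apply Rabs_Phi_le, Hadm].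
  destruct Hadm as [Hg HM].
  apply (continuousR_clamp_comp (fun y => f y (green g y) (green1 g y) (kint k (green g) y))).
  apply cont01_iff. intros x Hx eps Heps.
  destruct (f_cont x _ _ _ (green_in_DM g x (conj Hg HM) Hx) eps Heps) as [d0 [Hd0 H0]].
  destruct (proj1 (continuous_iff _ x) (continuousR_green g Hg x) d0 Hd0) as [d1 [Hd1 H1]].
  destruct (proj1 (continuous_iff _ x) (continuousR_green1 g Hg x) d0 Hd0) as [d2 [Hd2 H2]].
  assert (Hz : cont01 (kint k (green g))).
  { apply (cont01_kint k k_cont _ (M0 * M)); [apply continuousR_green, Hg|].
    intros s Hs. apply Rabs_green_le; auto. unfold I01; lra. }
  destruct (proj1 (cont01_iff _) Hz x Hx d0 Hd0) as [d3 [Hd3 H3]].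
  exists (Rmin (Rmin d0 d1) (Rmin d2 d3)).
  split; [repeat apply Rmin_glb_lt; assumption|]. intros y Hy Hyd.
  assert (Rabs (y - x) < d0 /\ Rabs (y - x) < d1 /\ Rabs (y - x) < d2 /\ Rabs (y - x) < d3)
    as (Hy0 & Hy1 & Hy2 & Hy3).
  { pose proof (Rmin_l (Rmin d0 d1) (Rmin d2 d3)). pose proof (Rmin_r (Rmin d0 d1) (Rmin d2 d3)).
    pose proof (Rmin_l d0 d1). pose proof (Rmin_r d0 d1).
    pose proof (Rmin_l d2 d3). pose proof (Rmin_r d2 d3). lra. }
  apply H0; auto. apply green_in_DM; [split|]; assumption.
Qed.

Lemma Phi_contraction g1 g2 E : admissible M g1 -> admissible M g2 ->
  bounded01 (fun s => g1 s - g2 s) E -> forall x,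
  Rabs (Phi k f g1 x - Phi k f g2 x) <= (L0 * M0 + L1 * M1 + L2 * M0 * M2 k) * E.
Proof.
  intros Hg1 Hg2 HE x. unfold Phi. set (y := clamp x).
  assert (Hy : I01 y) by apply clamp_I01.
  destruct Hg1 as [C1 B1], Hg2 as [C2 B2].
  assert (Cd := continuousR_minus g1 g2 C1 C2).
  eapply Rle_trans; [apply f_lipschitz; apply green_in_DM; auto; split; assumption|].
  destruct (green_minus g1 g2 y C1 C2) as [D0 D1].
  assert (Hu := Rabs_green_le _ E y Cd HE Hy).
  assert (Hv := Rabs_green1_le _ E y Cd HE Hy).
  rewrite D0 in Hu. rewrite D1 in Hv.
  assert (Hz : Rabs (kint k (green g1) y - kint k (green g2) y) <= M2 k * (M0 * E)).
  { rewrite kint_minus by (auto; apply continuousR_green; auto).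
    apply Rabs_kint_le; auto; [apply continuousR_minus; apply continuousR_green; auto|].
    intros t Ht. rewrite <- (proj1 (green_minus g1 g2 t C1 C2)).
    apply Rabs_green_le; auto. unfold I01; lra. }
  apply Rmult_le_compat_l with (r := L0) in Hu; auto.
  apply Rmult_le_compat_l with (r := L1) in Hv; auto.
  apply Rmult_le_compat_l with (r := L2) in Hz; auto.
  lra.
Qed.

Lemma fixpoint_is_solution h : admissible M h -> (forall x, Phi k f h x = h x) ->
  is_solution f k M (green h) (green1 h) (green2 h) (green3 h) h.
Proof.
  intros [Hh HM] Hfix. split; [|split; [|split; [|split; [|split; [|split]]]]].
  - split; [|split; [|split; [|split]]];
      [ apply is_deriv01_of_is_derive, is_derive_green
      | apply is_deriv01_of_is_derive, is_derive_green1
      | apply is_deriv01_of_is_derive, is_derive_green2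
      | apply is_deriv01_of_is_derive, is_derive_green3
      | apply cont01_continuousR ]; exact Hh.
  - intros x Hx. rewrite <- (Hfix x). unfold Phi.
    rewrite clamp_id by (unfold I01; lra). reflexivity.
  - apply green_at0.
  - apply green_at1.
  - apply green2_at0.
  - apply green2_at1.
  - intros x Hx. split; [apply Rabs_green_le | apply Rabs_green1_le]; assumption.
Qed.

Lemma solution_fixpoint w w1 w2 w3 w4 : is_solution f k M w w1 w2 w3 w4 ->
  let g := fun t => w4 (clamp t) in
  admissible M g /\ (forall s, 0 < s < 1 -> Phi k f g s = g s) /\
  forall x, I01 x -> w x = green g x.
Proof.
  intros (HC4 & Hode & B0 & B1 & B20 & B21 & Hbnd) g.
  assert (Hg : continuousR g)
    by exact (continuousR_clamp_comp w4 (proj2 (proj2 (proj2 (proj2 HC4))))).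
  assert (Hw := C4_bvp_green w w1 w2 w3 w4 HC4 B0 B1 B20 B21). fold g in Hw.
  assert (Hint : forall s, RInt (fun t => k s t * w t) 0 1 = kint k (green g) s).
  { intros s. apply RInt_ext_R. rewrite Rmin_left, Rmax_right by lra. intros t Ht.
    rewrite (proj1 (Hw t ltac:(unfold I01; lra))). reflexivity. }
  assert (Hfix : forall s, 0 < s < 1 ->
            g s = f s (green g s) (green1 g s) (kint k (green g) s)).
  { intros s Hs. assert (Is : I01 s) by (unfold I01; lra).
    unfold g. rewrite clamp_id, Hode, Hint by auto.
    destruct (Hw s Is) as [-> ->]. reflexivity. }
  assert (HM : bounded01 g M).
  { intros s Hs. assert (Is : I01 s) by (unfold I01; lra). rewrite Hfix by exact Hs.
    destruct (Hw s Is) as [Ws W1s]. destruct (Hbnd s Is) as [Bu Bv].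
    apply f_bound. split; [exact Is|]. rewrite <- Ws, <- W1s.
    split; [exact Bu|]. split; [exact Bv|].
    replace (M0 * M2 k * M) with (M2 k * (M0 * M)) by ring.
    apply Rabs_kint_le; auto; [apply continuousR_green, Hg|].
    intros t Ht. rewrite <- (proj1 (Hw t ltac:(unfold I01; lra))).
    apply Hbnd. unfold I01; lra. }
  split; [split; assumption|]. split; [|intros x Hx; apply Hw, Hx].
  intros s Hs. rewrite Hfix by exact Hs. unfold Phi. rewrite clamp_id by (unfold I01; lra).
  reflexivity.
Qed.

End Operator.

Lemma contraction_constant_ge0 k L0 L1 L2 : cont_on_square k ->
  0 <= L0 -> 0 <= L1 -> 0 <= L2 -> 0 <= L0 * M0 + L1 * M1 + L2 * M0 * M2 k.
Proof.
  intros Hk HL0 HL1 HL2.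
  pose proof (max_int_abs_ge0 G0 2 int_abs_bounded_G0).
  pose proof (max_int_abs_ge0 G1 2 int_abs_bounded_G1).
  pose proof (M2_ge0 k Hk).
  unfold M0, M1 in *. apply Rplus_le_le_0_compat; [apply Rplus_le_le_0_compat|];
    repeat apply Rmult_le_pos; assumption.
Qed.

Theorem theorem1 (k : R -> R -> R) (f : R -> R -> R -> R -> R)
  (M L0 L1 L2 : R) :
  cont_on_square k ->
  0 < M -> 0 <= L0 -> 0 <= L1 -> 0 <= L2 ->
  cont_on4 f (DM k M) ->
  (forall x u v z, DM k M x u v z -> Rabs (f x u v z) <= M) ->
  (forall x1 u1 v1 z1 x2 u2 v2 z2, DM k M x1 u1 v1 z1 -> DM k M x2 u2 v2 z2 ->
     Rabs (f x2 u2 v2 z2 - f x1 u1 v1 z1)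
       <= L0 * Rabs (u2 - u1) + L1 * Rabs (v2 - v1) + L2 * Rabs (z2 - z1)) ->
  L0 * M0 + L1 * M1 + L2 * M0 * M2 k < 1 ->
  (exists u u1 u2 u3 u4, is_solution f k M u u1 u2 u3 u4 /\
     forall w w1 w2 w3 w4, is_solution f k M w w1 w2 w3 w4 ->
       forall x, I01 x -> w x = u x).
Proof.
  intros Hk HM HL0 HL1 HL2 Hfc Hfb Hfl Hq.
  set (q := L0 * M0 + L1 * M1 + L2 * M0 * M2 k) in *.
  assert (Hq01 : 0 <= q < 1) by (split; [apply contraction_constant_ge0|]; assumption).
  assert (Hcontr := Phi_contraction k f M L0 L1 L2 Hk Hfl HL0 HL1 HL2).
  assert (H0 : admissible M (fun _ => 0)).
  { split; [apply continuousR_const | intros s _; rewrite Rabs_R0; lra]. }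
  destruct (contraction_fixpoint (admissible M) (Phi k f) q Hq01 Hcontr
              (admissible_Phi k f M Hk Hfc Hfb) (admissible_closed M) (fun _ => 0) M H0)
    as [h [Hh Hfix]].
  { intros x. rewrite Rminus_0_r. exact (Rabs_Phi_le k f M Hk Hfb _ x H0). }
  exists (green h), (green1 h), (green2 h), (green3 h), h.
  split; [exact (fixpoint_is_solution k f M h Hh Hfix)|].
  intros w w1 w2 w3 w4 Hw x Hx.
  destruct (solution_fixpoint k f M Hk Hfb w w1 w2 w3 w4 Hw) as (Hg & Hfixg & Hwg).
  rewrite Hwg by exact Hx. apply (green_ext _ _ x); [|exact Hx].
  apply (contraction_fixpoint_unique (admissible M) (Phi k f) q Hq01 Hcontr _ h (M + M) Hg Hh);
    [apply bounded01_minus; [apply Hg | apply Hh] | exact Hfixg | intros s _; apply Hfix].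
Qed.
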